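(* Let $d$ be a positive integer, $0\le\kappa<d$ real, and $K>0$. Let $\tau,\eta>0$ be constants, and for a positive integer $N$ put $r=\eta(\log N)^{\frac{d\kappa}{d-\kappa}}$ (taken to be an integer) and let $\mathcal{P}_I$ be the set of primes in $I=[\tau(\log N)^{\frac{d}{d-\kappa}},2\tau(\log N)^{\frac{d}{d-\kappa}}]$. Let $S\subseteq[N]^d$ be nonempty and occupy at most $Kp^{\kappa}$ residue classes modulo $p$ for every $p\in\mathcal{P}_I$. There is a constant $C_1$ (depending only on $K$ and $\kappa$) such that if $\eta\ge C_1\tau^\kappa$, then there are constants $c',c''>0$ independent of $N$ and $S$ such that, for all sufficiently large $N$, there exist an $r$-tuple $\mathcal{C}=(c_1,\ldots,c_r)\in S^r$ of elements of $S$ and a subset $S'\subseteq S$ with $|S'|\ge c'|S|$ such that for every $x\in S'$, $$\sum_{p\in\mathcal{P}_I}\mathbf{1}_{\exists i:\ x\equiv c_i \ (\mathrm{mod}\ p)}\,\log p\ \ge\ c''|I|.$$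
   Context: $\mathbf{1}_{Q}$ equals $1$ if the statement $Q$ holds and $0$ otherwise; congruence of vectors mod $p$ is coordinatewise; $|I|$ is the length of the interval $I$. *)

From HB Require Import structures.
From mathcomp Require Import all_boot all_order all_algebra.
From mathcomp Require Import reals exp.
Set Implicit Arguments. Unset Strict Implicit. Unset Printing Implicit Defensive.
Import Order.TTheory GRing.Theory Num.Theory.
Local Open Scope ring_scope.

(* A point of [N]^d = {1,...,N}^d : coordinate i is (val (x i)).+1. *)
Definition point (d N : nat) := {ffun 'I_d -> 'I_N}.
Definition coord (d N : nat) (x : point d N) (i : 'I_d) : nat := (val (x i)).+1.

Definition cong_mod (d N : nat) (p : nat) (x y : point d N) : bool :=
  [forall i, (coord x i == coord y i %[mod p])%N].

Definition resid (d N : nat) (p : nat) (x : point d N) : seq nat :=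
  [seq (coord x i %% p)%N | i <- enum (ordinal d)].

Definition nclasses (d N : nat) (p : nat) (S : {set point d N}) : nat :=
  size (undup [seq resid p x | x <- enum S]).

Definition Lscale (R : realType) (d : nat) (kappa : R) (N : nat) : R :=
  powR (ln (N%:R)) (d%:R / (d%:R - kappa)).

Definition rlen (R : realType) (d : nat) (kappa eta : R) (N : nat) : nat :=
  Num.truncn (eta * powR (ln (N%:R)) (d%:R * kappa / (d%:R - kappa))).

Definition primesI (R : realType) (d : nat) (kappa tau : R) (N : nat) : seq nat :=
  let L := Lscale d kappa N in
  [seq p <- iota 0 (Num.truncn (2 * tau * L)).+1 |
     prime p && (tau * L <= p%:R) && (p%:R <= 2 * tau * L)].

(* Choose the r-tuple C uniformly at random in S^r.  A point x of S whose residue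
   class modulo p has k elements misses every c_i modulo p with probability
   (1 - k/|S|)^r <= |S|/(r k) by Bernoulli's inequality; summing over S, the
   expected number of points missed at p is at most |S| m_p / r, where m_p is
   the number of classes of S modulo p.  Writing L = (log N)^(d/(d-kappa)), so
   that I = [tau L, 2 tau L] and r = eta L^kappa, the hypothesis gives
   m_p <= K (2 tau L)^kappa <= r/2 once eta >= 2 K 2^kappa tau^kappa.  Hence
   some tuple collects on average over x in S at least half of the weight
   W = sum_(p in I) log p, and then a quarter of S collects at least W/4 each.
   Finally W >= c |I| for large N by Chebyshev's bound for primes in a dyadic
   interval, obtained from Erdős's estimates of the central binomial
   coefficient. *)

From mathcomp Require Import all_boot all_order all_algebra.
From mathcomp Require Import zify ring lra.
From mathcomp Require Import reals exp.
Set Implicit Arguments. Unset Strict Implicit. Unset Printing Implicit Defensive.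
Import Order.TTheory GRing.Theory Num.Theory.

Lemma divn_double n q : 0 < q -> n.*2 %/ q = (n %/ q).*2 + (q <= (n %% q).*2).
Proof. by move=> q0; rewrite -!addnn divnD. Qed.

Lemma logn_fact_small p m : prime p -> m < p -> logn p m`! = 0.
Proof.
move=> pp hm; rewrite logn_fact //; apply: big1_seq => k /andP [_].
rewrite mem_index_iota => /andP [hk _]; apply: divn_small.
by apply: leq_trans hm _; rewrite -[X in X <= _]expn1 leq_exp2l ?prime_gt1.
Qed.

(* Legendre's formula: the k-th term is the carry in the k-th base-p digit of n + n. *)
Lemma logn_bin_central p n : prime p ->
  logn p 'C(n.*2, n) = \sum_(1 <= k < n.*2.+1) (p ^ k <= (n %% p ^ k).*2).
Proof.
move=> pp; have p1 := prime_gt1 pp.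
have pk k : 0 < p ^ k by rewrite expn_gt0 ltnW.
have := bin_fact (leq_addl n n); rewrite addnK addnn => hfact.
have C0 : 0 < 'C(n.*2, n) by rewrite bin_gt0 -addnn leq_addl.
have ext : \sum_(1 <= k < n.+1) n %/ p ^ k = \sum_(1 <= k < n.*2.+1) n %/ p ^ k.
  rewrite (big_cat_nat _ (n := n.+1) (p := n.*2.+1)) //=; last first.
    by rewrite ltnS -addnn leq_addl.
  rewrite [X in _ = _ + X]big1_seq ?addn0 // => k /andP [_].
  rewrite mem_index_iota => /andP [hk _]; apply: divn_small.
  by apply: leq_trans (ltn_expl _ p1); apply: leq_trans hk.
have := logn_fact n.*2 pp.
rewrite -hfact !lognM ?muln_gt0 ?fact_gt0 // !logn_fact // ext.
under [X in _ = X -> _]eq_bigr do rewrite divn_double // -addnn.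
by rewrite !big_split /=; lia.
Qed.

Lemma expn_logn_bin_central_le p n : prime p -> 0 < n ->
  p ^ logn p 'C(n.*2, n) <= n.*2.
Proof.
move=> pp n0; have p1 := prime_gt1 pp.
set t := trunc_log p n.*2.
have ht : p ^ t <= n.*2 by apply: trunc_logP => //; rewrite double_gt0.
suff : logn p 'C(n.*2, n) <= t.
  by move=> h; apply: leq_trans ht; apply: leq_pexp2l => //; apply: ltnW.
have tle : t <= n.*2 by apply: leq_trans ht; apply: ltnW; apply: ltn_expl.
rewrite logn_bin_central // (big_cat_nat _ (n := t.+1)) //=.
rewrite [X in _ + X]big1_seq ?addn0; last first.
  move=> k /andP [_]; rewrite mem_index_iota => /andP [hk _].
  have h : n.*2 < p ^ k.
    by apply: leq_trans (trunc_log_ltn _ p1) _; apply: leq_pexp2l => //; apply: ltnW.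
  by rewrite leqNgt (leq_ltn_trans _ h) // leq_double leq_mod.
apply: (@leq_trans (\sum_(1 <= k < t.+1) 1)); first by apply: leq_sum => k _; apply: leq_b1.
by rewrite sum_nat_const_nat muln1 subn1.
Qed.

Lemma logn_bin_central_gt p n : prime p -> 0 < n -> n.*2 < p ->
  logn p 'C(n.*2, n) = 0.
Proof.
move=> pp n0 hp; have := expn_logn_bin_central_le pp n0.
case: (logn p _) => // v h.
have : p ^ 1 <= p ^ v.+1 by apply: leq_pexp2l; [apply: prime_gt0|].
rewrite expn1; lia.
Qed.

Lemma logn_bin_central_mid p n : prime p -> n.*2 < 3 * p -> p <= n ->
  n.*2 < p * p -> logn p 'C(n.*2, n) = 0.
Proof.
move=> pp h3 hpn hsq; have p1 := prime_gt1 pp.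
rewrite logn_bin_central //; apply: big1_seq => k /andP [_].
rewrite mem_index_iota => /andP [hk _].
case: k hk => // -[|k] _.
  rewrite expn1 (_ : n %% p = n - p); last first.
    by rewrite -{1}(subnK hpn) modnDr modn_small //; lia.
  suff -> : (p <= (n - p).*2) = false by [].
  by apply/negbTE; rewrite -ltnNge -addnn; lia.
have : p ^ 2 <= p ^ k.+2 by apply: leq_pexp2l; lia.
rewrite (expnS p 1) expn1 => hpk.
rewrite modn_small; last by rewrite -addnn in hsq; lia.
suff -> : (p ^ k.+2 <= n.*2) = false by [].
by apply/negbTE; rewrite -ltnNge; lia.
Qed.

Lemma logn_bin_odd_gt0 p k : prime p -> k.+1 < p -> p <= k.*2.+1 ->
  0 < logn p 'C(k.*2.+1, k).
Proof.
move=> pp h1 h2.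
have hle : k <= k.*2.+1 by rewrite -addnn; lia.
have := bin_fact hle; rewrite (_ : k.*2.+1 - k = k.+1); last by rewrite -addnn; lia.
move=> hfact.
have hf : logn p (k.*2.+1)`! = logn p 'C(k.*2.+1, k) + logn p k`! + logn p k.+1`!.
  by rewrite -hfact lognM ?muln_gt0 ?fact_gt0 ?bin_gt0 // lognM ?fact_gt0 // addnA.
rewrite (@logn_fact_small p k) ?(@logn_fact_small p k.+1) ?addn0 // in hf; try lia.
rewrite -hf logn_fact // big_ltn ?ltnS //= expn1.
suff : 0 < k.*2.+1 %/ p by lia.
by rewrite divn_gt0 ?prime_gt0.
Qed.

(* 'C(2k+1, k) = 'C(2k+1, k+1) are two of the terms of (1 + 1)^(2k+1) = 2 * 4^k. *)
Lemma bin_odd_mid_le k : 'C(k.*2.+1, k) <= 4 ^ k.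
Proof.
have hs : 'C(k.*2.+1, k.+1) = 'C(k.*2.+1, k).
  by rewrite -{1}(_ : k.*2.+1 - k = k.+1) ?bin_sub -?addnn; lia.
have := expnDn 1 1 k.*2.+1.
rewrite -(big_mkord xpredT (fun i => 'C(k.*2.+1, i) * (1 ^ (k.*2.+1 - i) * 1 ^ i))).
rewrite (big_cat_nat _ (n := k) (p := k.*2.+2)) //=; last by rewrite -addnn; lia.
rewrite (big_cat_nat _ (m := k) (n := k.+2) (p := k.*2.+2)) //=; try by rewrite -?addnn; lia.
have -> : \sum_(k <= i < k.+2) 'C(k.*2.+1, i) * (1 ^ (k.*2.+1 - i) * 1 ^ i) =
    'C(k.*2.+1, k) + 'C(k.*2.+1, k.+1).
  by rewrite big_ltn // big_ltn // big_geq // addn0 !exp1n !muln1.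
have -> : (1 + 1) ^ k.*2.+1 = 2 * 4 ^ k by rewrite expnS -mul2n expnM.
by rewrite hs; lia.
Qed.

Lemma bin_central_ge n : 4 ^ n <= n.*2.+1 * 'C(n.*2, n).
Proof.
elim: n => [|n IH] //.
have e1 := mul_bin_down n.*2.+1 n.
have e2 := mul_bin_diag n.*2.+2 n.
rewrite /= in e1 e2.
rewrite (_ : n.*2.+1 - n = n.+1) in e1; last by rewrite -addnn; lia.
rewrite doubleS expnS.
move: IH e1 e2; set A := 'C(n.*2, n); set B := 'C(n.*2.+1, n); set C := 'C(n.*2.+2, n.+1).
rewrite -!addnn; nia.
Qed.

(* Bernoulli's inequality (1 + b/a)^r >= 1 + r b/a, cleared of denominators. *)
Lemma bernoulli_leq a b r : r * b * a ^ r <= (a + b) ^ r.+1.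
Proof.
have bern : a ^ r * (a + r * b) <= a * (a + b) ^ r.
  elim: r => [|r IH]; first by rewrite !expn0 mul0n addn0 mul1n muln1.
  rewrite !expnS; move: IH; set X := a ^ r; set Y := (a + b) ^ r => IH.
  have := leq_mul (leqnn (a + b)) IH; nia.
apply: (@leq_trans (a ^ r * (a + r * b))); first by rewrite mulnC leq_mul2l leq_addl orbT.
by apply: leq_trans bern _; rewrite expnS leq_mul2r leq_addr orbT.
Qed.

Local Open Scope ring_scope.

Section Chebyshev.
Variable R : realType.

Lemma ln_nat_ge0 (p : nat) : 0 <= ln (p%:R : R).
Proof. by case: p => [|p]; [rewrite ln0 | apply: ln_ge0; rewrite ler1n]. Qed.

Lemma ln_natX (p e : nat) : ln ((p ^ e)%:R : R) = e%:R * ln (p%:R : R).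
Proof.
case: p => [|p]; last by rewrite natrX lnXn ?ltr0Sn // mulr_natl.
by case: e => [|e]; rewrite ?expn0 ?ln1 ?mul0r // exp0n // !ln0 ?mulr0.
Qed.

Lemma ln_prod_nat (r : seq nat) (P : pred nat) (F : nat -> nat) :
  (forall i, (0 < F i)%N) ->
  ln ((\prod_(i <- r | P i) F i)%:R : R) = \sum_(i <- r | P i) ln ((F i)%:R : R).
Proof.
move=> Fp; elim: r => [|a r IH]; first by rewrite !big_nil ln1.
rewrite !big_cons; case: (P a) => //.
by rewrite natrM lnM ?IH // posrE ltr0n // prodn_gt0.
Qed.

Lemma ler_sum_nat_widen (B B' : nat) (F : nat -> R) :
  (B <= B')%N -> (forall p, 0 <= F p) ->
  \sum_(0 <= p < B) F p <= \sum_(0 <= p < B') F p.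
Proof.
move=> hB F0; rewrite (big_cat_nat _ (n := B) (p := B')) //=.
by rewrite lerDl sumr_ge0.
Qed.

Lemma ln_nat_logn_sum (m B : nat) : (0 < m)%N -> (m < B)%N ->
  ln (m%:R : R) = \sum_(0 <= p < B) (logn p m)%:R * ln (p%:R : R).
Proof.
move=> m0 mB; rewrite -{1}(partnT m0) /partn ln_prod_nat //.
rewrite (big_cat_nat _ (n := m.+1) (p := B)) //=.
rewrite [X in _ = _ + X]big1_seq ?addr0; last first.
  move=> k /andP [_]; rewrite mem_index_iota => /andP [hk _].
  by rewrite ltn_log0 ?mul0r.
by apply: eq_bigr => p _; rewrite ln_natX.
Qed.

Lemma logn_sum_le_ln (m B : nat) : (0 < m)%N ->
  \sum_(0 <= p < B) (logn p m)%:R * ln (p%:R : R) <= ln (m%:R : R).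
Proof.
move=> m0; rewrite (@ln_nat_logn_sum m (maxn B m.+1)) ?leq_max ?leqnn ?orbT //.
apply: ler_sum_nat_widen; first by rewrite leq_max leqnn.
by move=> p; rewrite mulr_ge0 ?ln_nat_ge0.
Qed.

Definition theta (m : nat) : R := \sum_(0 <= p < m.+1 | prime p) ln (p%:R : R).

Lemma thetaE (B m : nat) : (m < B)%N ->
  theta m = \sum_(0 <= p < B) (if prime p && (p <= m)%N then ln (p%:R : R) else 0).
Proof.
move=> mB; rewrite /theta big_mkcond (big_cat_nat _ (n := m.+1) (p := B)) //=.
rewrite [X in _ = _ + X]big1_seq ?addr0; last first.
  by move=> p /andP [_]; rewrite mem_index_iota => /andP [hp _]; rewrite leqNgt hp andbF.
by apply: eq_big_nat => p /andP [_ hp]; rewrite ltnS in hp; rewrite hp andbT.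
Qed.

Lemma thetaS (m : nat) :
  theta m.+1 = theta m + (if prime m.+1 then ln (m.+1%:R : R) else 0).
Proof. by rewrite /theta big_mkcond big_nat_recr //= -big_mkcond. Qed.

Lemma theta_le1 (m : nat) : (m <= 1)%N -> theta m = 0.
Proof.
move=> m1; rewrite /theta big1_seq // => p /andP [pp].
by rewrite mem_index_iota => /andP [_ hp]; have := prime_gt1 pp; lia.
Qed.

Lemma theta_odd_le (k : nat) :
  theta k.*2.+1 <= theta k.+1 + ln ('C(k.*2.+1, k)%:R : R).
Proof.
have C0 : (0 < 'C(k.*2.+1, k))%N by rewrite bin_gt0 -addnn; lia.
apply: (le_trans _ (lerD (lexx _) (logn_sum_le_ln k.*2.+2 C0))).
rewrite (@thetaE k.*2.+2 k.*2.+1) // (@thetaE k.*2.+2 k.+1); last by rewrite -addnn; lia.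
rewrite -big_split /=; apply: ler_sum => p _.
have hv : 0 <= (logn p 'C(k.*2.+1, k))%:R * ln (p%:R : R) by rewrite mulr_ge0 ?ln_nat_ge0.
case: (boolP (prime p)) => //= pp; last by rewrite add0r.
case: (leqP p k.+1) => hp1.
  by rewrite (leq_trans hp1) ?lerDl // -addnn; lia.
case: leqP => hp2; last by rewrite add0r.
by rewrite add0r ler_peMl ?ln_nat_ge0 // ler1n logn_bin_odd_gt0.
Qed.

Lemma theta_le (m : nat) : theta m <= m%:R * ln (4 : R).
Proof.
have l4 : 0 <= ln (4 : R) by apply: ln_ge0; rewrite ler1n.
elim/ltn_ind: m => m IH.
have [m1|m1] := leqP m 1; first by rewrite theta_le1 // mulr_ge0.
have := odd_double_half m; move: (odd m) m./2 => b k mE; subst m.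
have k1 : (0 < k)%N by move: m1; case: (b); rewrite /= -addnn; lia.
case: b {m1} IH => /= IH.
  rewrite add1n; apply: (le_trans (theta_odd_le k)).
  have hC : ln ('C(k.*2.+1, k)%:R : R) <= k%:R * ln 4.
    rewrite mulr_natl -lnXn ?ltr0n // -natrX ler_ln ?posrE ?ltr0n ?expn_gt0 ?bin_gt0 //.
      by rewrite ler_nat bin_odd_mid_le.
    by rewrite -addnn; lia.
  have hk : (k.+1 < 1 + k.*2)%N by rewrite -addnn; lia.
  have := IH _ hk.
  have -> : k.*2.+1%:R = k.+1%:R + k%:R :> R by rewrite -natrD -addnn addSn.
  by rewrite mulrDl; lra.
rewrite add0n in IH *.
have [k2|k2] := leqP k 1.
  have -> : k = 1%N by lia.
  rewrite thetaS theta_le1 // add0r.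
  have : ln (2 : R) <= ln 4 by rewrite ler_ln ?posrE //; lra.
  by rewrite (_ : 1.*2%:R = 2 :> R) //; lra.
have np : ~~ prime k.*2.
  by apply/negP => /even_prime [|]; rewrite ?odd_double //; lia.
have -> : k.*2 = (k.*2.-1).+1 by lia.
rewrite thetaS prednK ?double_gt0 // (negbTE np) addr0.
apply: le_trans (IH _ _) _; first by lia.
by rewrite ler_wpM2r // ler_nat; lia.
Qed.

Definition theta_dyadic (n : nat) : R :=
  \sum_(0 <= p < n.*2.+1) (if prime p && (n < p)%N then ln (p%:R : R) else 0).

(* Erdős: a prime power dividing 'C(2n, n) is at most 2n, primes above sqrt(2n)
   divide it at most once, and primes in (2n/3, n] not at all. *)
Lemma logn_ln_bin_central_le (n p : nat) : (0 < n)%N ->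
  (logn p 'C(n.*2, n))%:R * ln (p%:R : R) <=
  ((p * p <= n.*2)%N)%:R * ln (n.*2%:R : R)
  + (if prime p && (p <= n.*2 %/ 3)%N then ln (p%:R : R) else 0)
  + (if prime p && (n < p)%N then ln (p%:R : R) else 0).
Proof.
move=> n0; set C := 'C(n.*2, n).
have l2n := ln_nat_ge0 n.*2; have lp := ln_nat_ge0 p.
have nn (b : bool) : 0 <= (if b then ln (p%:R : R) else 0) by case: b.
have [pp|np] := boolP (prime p); last first.
  by rewrite lognE (negbTE np) mul0r !addr_ge0 ?mulr_ge0.
have [hsq|hsq] := leqP (p * p) n.*2.
  have : (logn p C)%:R * ln (p%:R : R) <= ln (n.*2%:R : R).
    rewrite -ln_natX ler_ln ?posrE ?ltr0n ?pfactor_gt0 ?double_gt0 // ler_nat.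
    exact: expn_logn_bin_central_le.
  have := nn (p <= n.*2 %/ 3)%N; have := nn (n < p)%N.
  rewrite /= mul1r; lra.
rewrite /= mul0r add0r.
have hv1 : (logn p C <= 1)%N.
  rewrite leqNgt; apply/negP => h2.
  have : (p ^ 2 <= p ^ logn p C)%N by apply: leq_pexp2l; [apply: prime_gt0|].
  by have := expn_logn_bin_central_le pp n0; rewrite -/C (expnS p 1) expn1; lia.
case E : (logn p C) hv1 => [|[|//]] _; first by rewrite mul0r addr_ge0.
rewrite mul1r; have [h3|h3] := leqP p (n.*2 %/ 3); first by rewrite lerDl.
have [h4|h4] := ltnP n p; first by rewrite lerDr.
have h3' : (n.*2 < 3 * p)%N by move: h3; rewrite ltnNge leq_divRL // mulnC -ltnNge.
by have := logn_bin_central_mid pp h3' h4 hsq; rewrite -/C E.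
Qed.

Lemma sum_ltn_le (B a : nat) : (\sum_(0 <= p < B) (p < a) <= a)%N.
Proof.
apply: (@leq_trans (\sum_(0 <= p < maxn B a) (p < a)%N)).
  rewrite (big_cat_nat _ (n := B) (p := maxn B a)) //= ?leq_addr //.
  by rewrite leq_max leqnn.
rewrite (big_cat_nat _ (n := a) (p := maxn B a)) //=; last by rewrite leq_max leqnn orbT.
rewrite [X in (_ + X <= _)%N]big1_seq ?addn0.
  rewrite (@eq_big_nat _ _ _ 0 a _ (fun=> 1%N)); last by move=> i /andP [_ ->].
  by rewrite sum_nat_const_nat muln1 subn0.
by move=> i /andP [_]; rewrite mem_index_iota => /andP [hi _]; rewrite ltnNge hi.
Qed.

Lemma ln_bin_central_le (n a : nat) : (0 < n)%N -> (n.*2 < a * a)%N ->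
  ln ('C(n.*2, n)%:R : R) <=
  a%:R * ln (n.*2%:R : R) + theta (n.*2 %/ 3) + theta_dyadic n.
Proof.
move=> n0 ha; set C := 'C(n.*2, n).
have C0 : (0 < C)%N by rewrite bin_gt0 -addnn leq_addl.
rewrite (@ln_nat_logn_sum C (maxn C.+1 n.*2.+1)) ?leq_max ?leqnn //.
rewrite (big_cat_nat _ (n := n.*2.+1)) ?leq_max ?leqnn ?orbT //=.
rewrite [X in _ + X <= _]big1_seq ?addr0; last first.
  move=> p /andP [_]; rewrite mem_index_iota => /andP [hp _].
  have [pp|np] := boolP (prime p); last by rewrite lognE (negbTE np) mul0r.
  by rewrite logn_bin_central_gt // mul0r.
rewrite (@thetaE n.*2.+1) ?ltnS ?leq_div //.
apply: le_trans (ler_sum _ (fun p _ => logn_ln_bin_central_le p n0)) _.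
rewrite !big_split /= lerD2r lerD2r -big_distrl /= -natr_sum ler_wpM2r ?ln_nat_ge0 //.
rewrite ler_nat; apply: leq_trans (sum_ltn_le n.*2.+1 a); apply: leq_sum => p _.
case: (leqP (p * p) n.*2) => // hs; case: ltnP => // hap.
by have := leq_mul hap hap; lia.
Qed.

Lemma ln_bin_central_ge (n : nat) :
  n%:R * ln (4 : R) - ln (n.*2.+1%:R : R) <= ln ('C(n.*2, n)%:R : R).
Proof.
have C0 : (0 < 'C(n.*2, n))%N by rewrite bin_gt0 -addnn leq_addl.
have : ln ((4 ^ n)%:R : R) <= ln ((n.*2.+1 * 'C(n.*2, n))%:R : R).
  by rewrite ler_ln ?posrE ?ltr0n ?muln_gt0 ?expn_gt0 // ler_nat bin_central_ge.
rewrite ln_natX natrM lnM ?posrE ?ltr0n //; lra.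
Qed.

Lemma theta_dyadic_ge (n a : nat) : (0 < n)%N -> (n.*2 < a * a)%N ->
  ln (4 : R) / 3 * n%:R - ln (n.*2.+1%:R : R) - a%:R * ln (n.*2%:R : R)
    <= theta_dyadic n.
Proof.
move=> n0 ha.
have := ln_bin_central_ge n; have := ln_bin_central_le n0 ha.
have := theta_le (n.*2 %/ 3).
have l4 : 0 <= ln (4 : R) by apply: ln_ge0; rewrite ler1n.
have h3 : (n.*2 %/ 3 * 3)%:R <= (2 * n)%:R :> R by rewrite ler_nat mul2n leq_divM.
rewrite !natrM in h3.
have : (n.*2 %/ 3)%:R * ln (4 : R) <= 2 * n%:R / 3 * ln 4.
  by rewrite ler_wpM2r // ler_pdivlMr //; lra.
lra.
Qed.

Lemma sqrt_sqrt_expr4 (y : R) : 0 <= y -> Num.sqrt (Num.sqrt y) ^+ 4 = y.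
Proof. by move=> y0; rewrite (_ : 4%N = (2 * 2)%N) // exprM !sqr_sqrtr ?sqrtr_ge0. Qed.

Lemma ln_le_fourth_root (y : R) : 1 <= y -> ln y <= 4 * Num.sqrt (Num.sqrt y).
Proof.
move=> y1; set w := Num.sqrt (Num.sqrt y).
have w4 : w ^+ 4 = y by rewrite sqrt_sqrt_expr4 // (le_trans ler01).
have w0 : 0 < w.
  rewrite lt_def sqrtr_ge0 andbT; apply/eqP => w0.
  by move: w4 y1; rewrite w0 expr0n /= => <-; rewrite ler10.
by rewrite -w4 lnXn // mulr_natl; apply: ler_wMn2r; rewrite ltW // ln_sublinear.
Qed.

(* theta_dyadic_ge with a = floor(w^2) + 1 > sqrt(2n), where w = (2n+1)^(1/4). *)
Lemma theta_dyadic_ge_fourth_root (n : nat) : (0 < n)%N ->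
  ln (4 : R) / 3 * n%:R - 4 * Num.sqrt (Num.sqrt n.*2.+1%:R) ^+ 3
    - 8 * Num.sqrt (Num.sqrt n.*2.+1%:R) <= theta_dyadic n.
Proof.
move=> n0; set y : R := n.*2.+1%:R; set w := Num.sqrt (Num.sqrt y).
have w4 : w ^+ 4 = y by rewrite sqrt_sqrt_expr4.
have lny : ln y <= 4 * w by apply: ln_le_fourth_root; rewrite /y ler1n.
have w0 : 0 <= w by apply: sqrtr_ge0.
have hw2 : 0 <= w ^+ 2 by rewrite exprn_ge0.
set a := (Num.truncn (w ^+ 2)).+1.
have ha2 : a%:R <= w ^+ 2 + 1 by rewrite /a -addn1 natrD lerD2r truncn_le.
have ha : (n.*2 < a * a)%N.
  suff : y < (a * a)%:R by rewrite /y ltr_nat; lia.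
  by rewrite natrM -w4 (_ : 4%N = (2 + 2)%N) // exprD ltr_pM // truncnS_gt.
have ln2n : ln (n.*2%:R : R) <= 4 * w.
  by apply: le_trans lny; rewrite ler_ln ?posrE ?ltr0n ?double_gt0 // ler_nat.
have haln : a%:R * ln (n.*2%:R : R) <= 4 * w ^+ 3 + 4 * w.
  apply: le_trans (ler_wpM2l (ler0n _ _) ln2n) _.
  apply: le_trans (ler_wpM2r _ ha2) _; first by rewrite mulr_ge0.
  by rewrite le_eqVlt; apply/orP; left; apply/eqP; ring.
have := theta_dyadic_ge n0 ha; rewrite -/y; lra.
Qed.

Lemma theta_dyadic_ge_linear :
  exists2 c : R, 0 < c & exists n0 : nat, forall n, (n0 <= n)%N -> c * n%:R <= theta_dyadic n.
Proof.
set A : R := ln 4 / 3.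
have A0 : 0 < A by rewrite divr_gt0 // ln_gt0 // ltr1n.
have A1 : A <= 4 / 3 by rewrite ler_pM2r ?invr_gt0 // ltW // ln_sublinear.
set W : R := 100 / A + 1.
have W0 : 0 <= W by rewrite addr_ge0 // divr_ge0 // ltW.
exists (A / 2); first by rewrite divr_gt0.
exists (Num.truncn (W ^+ 4)).+1 => n hn.
have n0 : (0 < n)%N by apply: leq_trans hn.
have := theta_dyadic_ge_fourth_root n0; rewrite -/A.
set y : R := n.*2.+1%:R; set w := Num.sqrt (Num.sqrt y) => hD.
have w4 : w ^+ 4 = y by rewrite sqrt_sqrt_expr4.
have wW : W <= w.
  rewrite leNgt; apply/negP => hw.
  have : w ^+ 4 < W ^+ 4 by rewrite ltr_pXn2r ?nnegrE ?sqrtr_ge0.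
  have := truncnS_gt (W ^+ 4); move: hn; rewrite -(ler_nat R) => hn.
  have : n%:R <= y by rewrite ler_nat -addnn; lia.
  by rewrite w4; lra.
have Aw : 100 <= A * w by rewrite mulrC -ler_pdivrMr //; move: wW; rewrite /W; lra.
have w1 : 1 <= w by apply: le_trans wW; rewrite lerDr divr_ge0 ?ltW.
have w3 : 1 <= w ^+ 3 by rewrite exprn_ege1.
have hw3 : w <= w ^+ 3.
  by rewrite -[X in X <= _]mulr1 exprS ler_wpM2l ?exprn_ege1 ?(le_trans ler01).
have hAw3 : 100 * w ^+ 3 <= A * w * w ^+ 3 by apply: ler_wpM2r => //; lra.
have hAy : A * y = A * w * w ^+ 3 by rewrite -w4 exprS mulrA.
have : A * y = 2 * (A * n%:R) + A by rewrite /y -addn1 -addnn !natrD; ring.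
lra.
Qed.

Definition dyadic_primes (x : R) : seq nat :=
  [seq p <- iota 0 (Num.truncn (2 * x)).+1 |
     prime p && (x <= p%:R) && (p%:R <= 2 * x)].

Lemma theta_dyadic_le (x : R) : 0 <= x ->
  theta_dyadic (Num.truncn x) <= \sum_(p <- dyadic_primes x) ln (p%:R : R).
Proof.
move=> x0; set n := Num.truncn x.
have hn1 : n%:R <= x by rewrite truncn_le.
have hn2 : x < n.+1%:R by apply: truncnS_gt.
have h2n : (n.*2 <= Num.truncn (2 * x))%N.
  by rewrite truncn_ge_nat ?mulr_ge0 // -mul2n natrM ler_wpM2l.
rewrite /dyadic_primes big_filter big_mkcond -/(index_iota 0 _) /theta_dyadic.
apply: le_trans (@ler_sum_nat_widen n.*2.+1 (Num.truncn (2 * x)).+1 _ _ _); last 2 first.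
- by rewrite ltnS.
- by move=> p; case: ifP => // _; apply: ln_nat_ge0.
rewrite big_seq [X in _ <= X]big_seq; apply: ler_sum => p.
rewrite mem_index_iota => /andP [_ hp2].
case: (boolP (prime p)) => pp //=; case: (ltnP n p) => hp //=; last by case: ifP => // _; apply: ln_nat_ge0.
have -> : x <= p%:R by apply: ltW; apply: lt_le_trans hn2 _; rewrite ler_nat.
suff -> : p%:R <= 2 * x by [].
apply: le_trans (_ : n.*2%:R <= _); first by rewrite ler_nat -ltnS.
by rewrite -mul2n natrM ler_wpM2l.
Qed.

Lemma chebyshev_dyadic : exists2 c : R, 0 < c &
  exists X0 : R, forall x, X0 <= x -> c * x <= \sum_(p <- dyadic_primes x) ln (p%:R : R).
Proof.
have [c c0 [n0 hc]] := theta_dyadic_ge_linear.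
exists (c / 2); first by rewrite divr_gt0.
exists (n0%:R + 2) => x hx.
have x0 : 0 <= x by apply: le_trans hx; rewrite addr_ge0.
apply: le_trans (theta_dyadic_le x0); set n := Num.truncn x.
have hn2 : x < n.+1%:R by apply: truncnS_gt.
have nn0 : (n0 < n)%N by rewrite -(ltr_nat R); move: hn2; rewrite -addn1 natrD; lra.
apply: le_trans (hc n (ltnW nn0)).
have : (1 <= n)%N by apply: leq_trans nn0.
rewrite -(ler_nat R) => h1; move: hn2; rewrite -addn1 natrD => hn2.
have : x <= 2 * n%:R by lra.
by move=> h; rewrite mulrAC ler_pdivrMr //; nra.
Qed.

End Chebyshev.

Section RandomTuple.
Variable R : realType.

Lemma sum_inv_card_fiber (T : finType) (U : eqType) (f : T -> U) (S : {set T}) :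
  \sum_(x in S) (#|[set y in S | f y == f x]|%:R)^-1 =
  (size (undup [seq f x | x <- enum S]))%:R :> R.
Proof.
set s := enum S; set u := undup [seq f x | x <- s].
set h := fun v => (#|[set y in S | f y == v]|%:R)^-1 : R.
rewrite (eq_bigr (fun x => h (f x))) // -big_enum -/s.
rewrite (eq_big_seq (fun x => \sum_(v <- u) (if v == f x then h v else 0))); last first.
  move=> x xs; rewrite (bigD1_seq (f x)) ?undup_uniq ?mem_undup ?map_f //=.
  by rewrite eqxx big1 ?addr0 // => v /negbTE ->.
rewrite exchange_big /= -sum1_size natr_sum; apply: eq_big_seq => v.
rewrite mem_undup => /mapP [x xs ->]; rewrite -big_mkcond /=.
have -> : \sum_(y <- s | f x == f y) h (f x) = #|[set y in S | f y == f x]|%:R * h (f x).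
  have -> : #|[set y in S | f y == f x]| = count (fun y => f x == f y) s.
    rewrite -sum1_count /s big_enum_cond -sum1_card; apply: eq_bigl => y.
    by rewrite !inE eq_sym.
  by rewrite -sum1_count natr_sum big_distrl /=; apply: eq_bigr => y _; rewrite mul1r.
rewrite mulfV // pnatr_eq0 -lt0n; apply/card_gt0P; exists x.
by rewrite !inE eqxx andbT -(mem_enum (mem S)).
Qed.

Lemma cong_modE d N p (x y : point d N) : cong_mod p x y = (resid p x == resid p y).
Proof.
apply/forallP/eqP => [h|h i]; first by apply/eq_in_map => i _; apply/eqP; exact: h.
by apply/eqP; have := (eq_in_map _ _ _).2 h i; apply; rewrite mem_enum.
Qed.

Lemma nclasses_gt0 d N p (S : {set point d N}) : S != set0 -> (0 < nclasses p S)%N.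
Proof.
case/set0Pn => x xS; rewrite /nclasses lt0n size_eq0; apply/eqP => h.
have : resid p x \in undup [seq resid p x | x <- enum S].
  by rewrite mem_undup map_f // mem_enum.
by rewrite h.
Qed.

Lemma ffun_on_setD (T : finType) (S : {set T}) (Q : pred T) (r : nat)
    (C : {ffun 'I_r -> T}) :
  (C \in ffun_on (S :\: [set y | Q y])) = (C \in ffun_on S) && ~~ [exists i, Q (C i)].
Proof.
apply/ffun_onP/andP => [h|[/ffun_onP h1 /existsPn h2] i].
  split; first by apply/ffun_onP => i; have := h i; rewrite in_setD => /andP [_ ->].
  by apply/existsPn => i; have := h i; rewrite in_setD inE => /andP [].
by rewrite in_setD inE h1 (h2 i).
Qed.

Lemma sum_ffun_on_hit (T : finType) (S : {set T}) (Q : pred T) (r : nat) :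
  \sum_(C in ffun_on S) ((if [exists i : 'I_r, Q (C i)] then 1 else 0) : R) =
  (#|S| ^ r)%:R - ((#|S| - #|[set y in S | Q y]|) ^ r)%:R.
Proof.
have card_tuples (A : {set T}) :
    \sum_(C : {ffun 'I_r -> T} | C \in ffun_on A) (1 : R) = (#|A| ^ r)%:R.
  by rewrite sumr_const card_ffun_on card_ord.
rewrite -card_tuples (_ : (#|S| - _)%N = #|S :\: [set y | Q y]|); last first.
  by rewrite cardsD setIdE.
rewrite -card_tuples big_mkcond [in RHS]big_mkcond [X in _ - X]big_mkcond -sumrB /=.
apply: eq_bigr => C _; rewrite ffun_on_setD.
by case: (C \in ffun_on S); case: [exists i, Q (C i)]; rewrite ?subr0 ?subrr.
Qed.

(* By Bernoulli, (n - k)^r <= n^(r+1) / (r k); the 1/k, summed over a class of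
   size k, contributes 1 per residue class. *)
Lemma sum_miss_le (d N p r : nat) (S : {set point d N}) :
  (2 * nclasses p S <= r)%N ->
  \sum_(x in S) ((#|S| - #|[set y in S | cong_mod p x y]|) ^ r)%:R
    <= (#|S| ^ r.+1)%:R / 2 :> R.
Proof.
move=> hm; set n := #|S|.
have [r0|r0] := posnP r.
  have S0 : S = set0.
    by apply/eqP; apply: contraTT hm => /(nclasses_gt0 p); rewrite r0; lia.
  by rewrite /n S0 big_set0 cards0 exp0n // mul0r.
have hk x : x \in S ->
   ((n - #|[set y in S | cong_mod p x y]|) ^ r)%:R <=
   (n ^ r.+1)%:R / r%:R * (#|[set y in S | cong_mod p x y]|%:R)^-1 :> R.
  move=> xS; set k := #|[set y in S | cong_mod p x y]|.
  have k1 : (0 < k)%N by apply/card_gt0P; exists x; rewrite inE xS /=; apply/forallP.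
  have kn : (k <= n)%N by apply: subset_leq_card; apply/subsetP => y; rewrite inE => /andP [].
  have := bernoulli_leq (n - k) k r; rewrite subnK // -(ler_nat R) !natrM => hb.
  rewrite -mulrA -invfM ler_pdivlMr ?mulr_gt0 ?ltr0n //.
  by rewrite mulrC.
apply: le_trans (ler_sum _ hk) _; rewrite -mulr_sumr.
have -> : \sum_(i in S) (#|[set y in S | cong_mod p i y]|%:R)^-1 = (nclasses p S)%:R :> R.
  rewrite -(@sum_inv_card_fiber _ _ (resid p) S) /nclasses; apply: eq_bigr => x _.
  by congr (_%:R^-1); apply: eq_card => y; rewrite !inE cong_modE eq_sym.
have hmR : 2 * (nclasses p S)%:R <= r%:R :> R by rewrite -natrM ler_nat.
rewrite -mulrA ler_wpM2l // mulrC ler_pdivrMr ?ltr0n // mulrC ler_pdivlMr //; lra.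
Qed.

Lemma sum_tuples_weight_ge (d N r : nat) (S : {set point d N}) (P : seq nat) :
  (forall p, p \in P -> (2 * nclasses p S <= r)%N) ->
  (#|S| ^ r)%:R * (#|S|%:R * (\sum_(p <- P) ln (p%:R : R)) / 2) <=
  \sum_(C in ffun_on S) \sum_(x in S) \sum_(p <- P)
     (if [exists i : 'I_r, cong_mod p x (C i)] then ln (p%:R : R) else 0).
Proof.
move=> hP; set n := #|S|.
rewrite exchange_big /=.
rewrite (eq_bigr (fun x => \sum_(p <- P) ln (p%:R : R) *
    ((n ^ r)%:R - ((n - #|[set y in S | cong_mod p x y]|) ^ r)%:R))); last first.
  move=> x xS; rewrite exchange_big /=; apply: eq_bigr => p _.
  rewrite -(sum_ffun_on_hit _ (cong_mod p x)) mulr_sumr; apply: eq_bigr => C _.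
  by case: ifP; rewrite ?mulr1 ?mulr0.
rewrite exchange_big /=.
have -> : (n ^ r)%:R * (n%:R * (\sum_(p <- P) ln (p%:R : R)) / 2) =
    \sum_(p <- P) ln (p%:R : R) * ((n ^ r.+1)%:R / 2).
  by rewrite -mulr_suml expnS natrM; ring.
rewrite big_seq [X in _ <= X]big_seq; apply: ler_sum => p pP.
rewrite -mulr_sumr; apply: ler_wpM2l; first exact: ln_nat_ge0.
rewrite sumrB sumr_const -/n.
have := sum_miss_le (hP p pP); rewrite -/n.
by rewrite -mulr_natr natrX exprS natrX; lra.
Qed.

Lemma exists_tuple_half_weight (d N r : nat) (S : {set point d N}) (P : seq nat) :
  S != set0 -> (forall p, p \in P -> (2 * nclasses p S <= r)%N) ->
  exists C : {ffun 'I_r -> point d N}, (forall i, C i \in S) /\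
    #|S|%:R * (\sum_(p <- P) ln (p%:R : R)) / 2 <=
    \sum_(x in S) \sum_(p <- P)
       (if [exists i, cong_mod p x (C i)] then ln (p%:R : R) else 0).
Proof.
move=> Sn0 hP; have [x0 x0S] := set0Pn _ Sn0.
set g := fun C : {ffun 'I_r -> point d N} => \sum_(x in S) \sum_(p <- P)
  (if [exists i, cong_mod p x (C i)] then ln (p%:R : R) else 0).
set A := [pred C : {ffun 'I_r -> point d N} | C \in ffun_on S].
have A0 : A [ffun=> x0] by apply/ffun_onP => i; rewrite ffunE.
have [Cm CmS hmax] := arg_maxP g A0.
exists Cm; split; first by move=> i; move/ffun_onP: CmS.
have hn : (0 : R) < (#|S| ^ r)%:R by rewrite ltr0n expn_gt0 card_gt0 Sn0.
rewrite -(ler_pM2l hn); apply: le_trans (sum_tuples_weight_ge hP) _.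
have -> : (#|S| ^ r)%:R = \sum_(C : {ffun 'I_r -> point d N} | C \in ffun_on S) (1 : R).
  by rewrite sumr_const card_ffun_on card_ord.
by rewrite mulr_suml; apply: ler_sum => C CS; rewrite mul1r; exact: hmax.
Qed.

Lemma card_large_ge (T : finType) (S : {set T}) (f : T -> R) (W : R) :
  0 < W -> (forall x, x \in S -> f x <= W) ->
  #|S|%:R * W / 2 <= \sum_(x in S) f x ->
  #|S|%:R / 4 <= #|[set x in S | W / 4 <= f x]|%:R :> R.
Proof.
move=> W0 fW hsum.
have [S' S'E] : {S' : {set T} | forall x, (x \in S') = (x \in S) && (W / 4 <= f x)}.
  by exists [set x in S | W / 4 <= f x] => x; rewrite inE.
rewrite (_ : [set x in S | _] = S'); last by apply/setP => x; rewrite inE S'E.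
have hpt x : x \in S -> f x <= (if x \in S' then W else 0) + W / 4.
  move=> xS; rewrite S'E xS /=; have := fW x xS.
  by case: (leP (W / 4) (f x)) => h /=; lra.
have eS : \sum_(x in S) (if x \in S' then W else 0) = \sum_(x in S') W.
  rewrite big_mkcond [RHS]big_mkcond; apply: eq_bigr => x _.
  by rewrite S'E; case: (x \in S); rewrite ?andTb ?andFb.
have := le_trans hsum (ler_sum _ hpt).
rewrite big_split /= eS !sumr_const -(mulr_natl W) -(mulr_natl (W / 4)).
move: #|S|%:R #|S'|%:R => s s' h.
by rewrite -(ler_pM2r W0); lra.
Qed.

End RandomTuple.

Lemma ln_nat_ge_eventually (R : realType) (M : R) :
  exists N0 : nat, forall N, (N0 <= N)%N -> M <= ln (N%:R : R).
Proof.
have l2 : (0 : R) < ln 2 by rewrite ln_gt0 // ltr1n.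
exists (2 ^ (Num.truncn (M / ln 2)).+1)%N => N hN.
apply: ltW; apply: lt_le_trans (_ : (Num.truncn (M / ln 2)).+1%:R * ln 2 <= _).
  by rewrite -ltr_pdivrMr // truncnS_gt.
rewrite -ln_natX ler_ln ?posrE ?ltr0n ?expn_gt0 ?ler_nat //.
by apply: leq_trans hN; rewrite expn_gt0.
Qed.

Section Scales.
Variables (R : realType) (d : nat) (kappa : R).
Hypotheses (kappa_ge0 : 0 <= kappa) (kappa_lt_d : kappa < d%:R).

Lemma primesI_dyadic (tau : R) (N : nat) :
  primesI d kappa tau N = dyadic_primes (tau * Lscale d kappa N).
Proof. by rewrite /primesI /dyadic_primes /= !mulrA. Qed.

Lemma ln_le_Lscale (N : nat) : 1 <= ln (N%:R : R) -> ln (N%:R : R) <= Lscale d kappa N.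
Proof.
move=> lnN1; apply: le1r_powR => //.
by rewrite ler_pdivlMr ?subr_gt0 // mul1r lerBlDr lerDl.
Qed.

Lemma rlenE (eta : R) (N : nat) :
  rlen d kappa eta N = Num.truncn (eta * powR (Lscale d kappa N) kappa).
Proof. by rewrite /rlen /Lscale -powRrM mulrAC. Qed.

Lemma nclasses_le_rlen (K tau eta : R) (N p : nat) (S : {set point d N}) :
  0 <= K -> 0 < tau -> 1 <= ln (N%:R : R) ->
  2 * K * powR 2 kappa * powR tau kappa <= eta ->
  p \in primesI d kappa tau N -> (nclasses p S)%:R <= K * powR (p%:R) kappa ->
  (2 * nclasses p S <= rlen d kappa eta N)%N.
Proof.
move=> K0 t0 lnN1 heta pP hS.
set L := Lscale d kappa N.
have L0 : 0 <= L by apply: le_trans (ln_le_Lscale lnN1); apply: le_trans lnN1.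
have hp : p%:R <= 2 * (tau * L).
  by move: pP; rewrite primesI_dyadic mem_filter => /andP [/andP [_ ->]].
have hpk : powR (p%:R : R) kappa <= powR 2 kappa * (powR tau kappa * powR L kappa).
  rewrite -!powRM ?mulr_ge0 ?(ltW t0) //.
  by apply: ge0_ler_powR; rewrite ?nnegrE ?mulr_ge0 ?(ltW t0).
have hLk : 0 <= powR L kappa by apply: powR_ge0.
have : (2 * nclasses p S)%:R <= eta * powR L kappa :> R.
  rewrite natrM; apply: le_trans (ler_wpM2r hLk heta).
  have := ler_wpM2l K0 hpk; rewrite !mulrA; lra.
move=> h; rewrite -ltnS -(ltr_nat R) rlenE; apply: le_lt_trans h _.
exact: truncnS_gt.
Qed.

End Scales.

Theorem proposition3p1 (R : realType) (d : nat) (kappa K : R) :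
  (0 < d)%N -> 0 <= kappa -> kappa < d%:R -> 0 < K ->
  exists C1 : R,
  forall tau eta : R, 0 < tau -> 0 < eta -> C1 * powR tau kappa <= eta ->
  exists c' c'' : R, 0 < c' /\ 0 < c'' /\
  exists N0 : nat, forall N : nat, (N0 <= N)%N ->
  forall S : {set point d N}, S != set0 ->
    (forall p : nat, p \in primesI d kappa tau N ->
       (nclasses p S)%:R <= K * powR (p%:R) kappa) ->
    exists (C : 'I_(rlen d kappa eta N) -> point d N) (S' : {set point d N}),
      (forall i, C i \in S) /\ S' \subset S /\
      c' * (#|S|%:R) <= (#|S'|%:R) /\
      forall x, x \in S' ->
        c'' * (tau * Lscale d kappa N) <=
        \sum_(p <- primesI d kappa tau N)
           (if [exists i, cong_mod p x (C i)] then ln (p%:R) else 0).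
Proof.
move=> _ k0 kd K0.
have [c0 c0_gt0 [X0 hcheb]] := chebyshev_dyadic R.
exists (2 * K * powR 2 kappa) => tau eta t0 _ heta.
exists 4^-1, (c0 / 4); split; first by rewrite invr_gt0.
split; first by rewrite divr_gt0.
have [N0 hN0] := ln_nat_ge_eventually (1 + `|X0| / tau).
exists N0 => N /hN0 hlnN S Sn0 hS.
have X0t : 0 <= `|X0| / tau by rewrite divr_ge0 // ltW.
have lnN1 : 1 <= ln (N%:R : R) by lra.
have hL := ln_le_Lscale k0 kd lnN1.
have hx : X0 <= tau * Lscale d kappa N.
  by apply: le_trans (ler_norm X0) _; rewrite mulrC -ler_pdivrMr //; lra.
have hr p : p \in primesI d kappa tau N -> (2 * nclasses p S <= rlen d kappa eta N)%N.
  by move=> pP; exact: (nclasses_le_rlen k0 kd (ltW K0) t0 lnN1 heta pP (hS p pP)).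
have [C [CS hC]] := exists_tuple_half_weight R Sn0 hr.
have := hcheb _ hx; rewrite -primesI_dyadic.
set W := \sum_(p <- _) _ => hW.
have W0 : 0 < W by apply: lt_le_trans hW; rewrite !mulr_gt0 //; lra.
set f := fun x => \sum_(p <- primesI d kappa tau N)
  (if [exists i, cong_mod p x (C i)] then ln (p%:R : R) else 0).
exists (fun i => C i), [set x in S | W / 4 <= f x]; split => //.
split; first by apply/subsetP => x; rewrite inE => /andP [].
split.
  rewrite mulrC; apply: card_large_ge W0 _ hC => x _.
  by apply: ler_sum => p _; case: ifP => // _; apply: ln_nat_ge0.
by move=> x; rewrite inE => /andP [_]; apply: le_trans; lra.
Qed.
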